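(* Let $X$ be a topological space. The bounded continuous valuations $\nu$ on $X$ that take only finitely many values are exactly the finite linear combinations $\sum_{i=1}^n a_i\, e_{C_i}$, where each $C_i$ is an irreducible closed subset of $X$ and each $a_i\in(0,\infty)$.
   Context: A valuation on $X$ is a map $\nu:\mathcal OX\to[0,\infty]$ with $\nu(\emptyset)=0$, monotone and modular; continuous if it preserves directed suprema of opens; bounded if $\nu(X)<\infty$. A non-empty subset $A$ is irreducible if $A\subseteq B\cup C$ with $B,C$ closed implies $A\subseteq B$ or $A\subseteq C$. For an irreducible closed $C$, $e_C:\mathcal OX\to[0,\infty]$ maps $U$ to $1$ if $U\cap C\neq\emptyset$ and to $0$ otherwise. (The empty sum, $n=0$, is the zero valuation.) *)

From HB Require Import structures.
From mathcomp Require Import all_boot all_order all_algebra.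
From mathcomp Require Import all_classical all_reals topology ereal.
Set Implicit Arguments. Unset Strict Implicit. Unset Printing Implicit Defensive.
Import Order.TTheory GRing.Theory Num.Theory.
Local Open Scope classical_set_scope.
Local Open Scope ereal_scope.

Section Valuations.
Context {R : realType} {X : topologicalType}.

(* A valuation: a map from the open sets of X to [0, +oo] (only its values on
   open sets matter), vanishing on the empty set, monotone and modular. *)
Definition is_valuation (nu : set X -> \bar R) : Prop :=
  [/\ nu set0 = 0,
      (forall U, open U -> 0 <= nu U),
      (forall U V, open U -> open V -> U `<=` V -> nu U <= nu V) &
      (forall U V, open U -> open V -> nu U + nu V = nu (U `|` V) + nu (U `&` V))].

Definition directed_open_family (D : set (set X)) : Prop :=
  [/\ D !=set0, (forall U, D U -> open U) &
      (forall U V, D U -> D V -> exists2 W, D W & (U `|` V) `<=` W)].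

Definition continuous_valuation (nu : set X -> \bar R) : Prop :=
  forall D, directed_open_family D ->
    nu (\bigcup_(U in D) U) = ereal_sup (nu @` D).

Definition bounded_valuation (nu : set X -> \bar R) : Prop := nu setT < +oo.

Definition finitely_valued (nu : set X -> \bar R) : Prop :=
  finite_set (nu @` [set U | open U]).

Definition irreducible (A : set X) : Prop :=
  A !=set0 /\ forall B C, closed B -> closed C -> A `<=` B `|` C ->
    A `<=` B \/ A `<=` C.

Definition point_val (C : set X) (U : set X) : \bar R :=
  if pselect (U `&` C !=set0) then 1 else 0.

End Valuations.

From HB Require Import structures.
From mathcomp Require Import all_boot all_order all_algebra.
From mathcomp Require Import all_classical all_reals topology ereal.
From mathcomp Require Import lra.
Import Order.TTheory GRing.Theory Num.Theory.
Local Open Scope classical_set_scope.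
Local Open Scope ereal_scope.

(* [e_C] is modular because [C] is irreducible (two opens meeting [C] meet
   inside [C]), and a positive combination of such valuations is continuous
   because a single member of a directed family of opens meets every [C_i] that
   the union meets.  Conversely, let [nu] be finitely valued with [nu X > 0]
   and let [V] be a maximal open set with [nu V < nu X]: it exists because the
   open sets containing a fixed [U0] on which [nu] takes its largest value
   [m < nu X] form, by modularity, a directed family whose union still has
   value [m].  Every open [W] not inside [V] then has [nu (W `|` V) = nu X]; by
   modularity this makes [C = X \ V] irreducible and gives
   [nu = (nu X - nu V) e_C + nu (_ `&` V)].  The restriction [nu (_ `&` V)] no
   longer takes the value [nu X], so induction on the number of values
   concludes. *)

Lemma exists_argmax_seq d (T : orderType d) (I : Type) (P : I -> Prop)
    (f : I -> T) (s : seq T) (i0 : I) :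
  P i0 -> (forall i, P i -> f i \in s) ->
  exists2 j, P j & forall i, P i -> (f i <= f j)%O.
Proof.
move=> Pi0 f_s; pose attained y := `[< exists2 i, P i & f i = y >].
have [j Pj fj] : exists2 j, P j & f j = \big[Order.max/f i0]_(y <- s | attained y) y.
  elim/big_ind: _ => [|y z [i Pi <-] [k Pk <-]|y /asboolP //]; first by exists i0.
  by rewrite /Order.max; case: ifP => _; [exists k|exists i].
exists j => // i Pi; rewrite fj; apply: le_bigmax_seq; first exact: f_s.
by apply/asboolP; exists i.
Qed.

Section Valuations.
Set Implicit Arguments.
Unset Strict Implicit.
Context {R : realType} {X : topologicalType}.
Implicit Types (nu : set X -> \bar R) (U V W C : set X).

Lemma bounded_valuation_EFin nu U :
  is_valuation nu -> bounded_valuation nu -> open U -> exists u : R, nu U = u%:E.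
Proof.
case=> _ nu_ge0 nu_le _ nu_bnd oU.
have := le_lt_trans (nu_le _ _ oU openT (@subsetT _ U)) nu_bnd.
by move: (nu_ge0 _ oU); case: (nu U) => // u; exists u.
Qed.

Lemma is_valuation_weighted_sum n (a : 'I_n -> R) (nus : 'I_n -> set X -> \bar R) :
  (forall i, 0 <= a i)%R -> (forall i, is_valuation (nus i)) ->
  is_valuation (fun U => \sum_(i < n) (a i)%:E * nus i U).
Proof.
move=> a_ge0 nus_val; split.
- by rewrite big1 // => i _; have [-> _ _ _] := nus_val i; rewrite mule0.
- move=> U oU; apply: sume_ge0 => i _; have [_ ge0 _ _] := nus_val i.
  by rewrite mule_ge0 ?lee_fin ?ge0.
- move=> U V oU oV UV; apply: lee_sum => i _; have [_ _ le _] := nus_val i.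
  by apply: lee_wpmul2l; [rewrite lee_fin|exact: le].
- move=> U V oU oV; rewrite -!big_split /=; apply: eq_bigr => i _.
  have [_ ge0 _ mod] := nus_val i.
  have oUV := openU oU oV; have oUIV := openI oU oV.
  by rewrite -!ge0_muleDr ?ge0 // mod.
Qed.

Lemma point_valE C U :
  point_val C U = if `[< U `&` C !=set0 >] then 1 else 0 :> \bar R.
Proof. by rewrite /point_val; case: pselect => h; [rewrite asboolT|rewrite asboolF]. Qed.

Lemma point_val_le C U V : (U `&` C !=set0 -> V `&` C !=set0) ->
  point_val C U <= point_val C V :> \bar R.
Proof.
move=> UV; rewrite !point_valE; case: asboolP => [/UV VC|_]; first by rewrite asboolT.
by case: ifP.
Qed.

Lemma irreducible_meetI C U V : irreducible C -> open U -> open V ->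
  U `&` C !=set0 -> V `&` C !=set0 -> (U `&` V) `&` C !=set0.
Proof.
move=> [_ C_irr] oU oV [x [Ux Cx]] [y [Vy Cy]]; apply: contrapT => UVC0.
have : C `<=` ~` U `|` ~` V.
  move=> z Cz; apply: contrapT => /not_orP[/contrapT Uz /contrapT Vz].
  by apply: UVC0; exists z.
by case/(C_irr _ _ (open_closedC oU) (open_closedC oV)) => [/(_ _ Cx)|/(_ _ Cy)].
Qed.

Lemma is_valuation_point_val C : irreducible C -> is_valuation (@point_val R X C).
Proof.
move=> C_irr; split=> [|U oU|U V oU oV UV|U V oU oV].
- by rewrite point_valE asboolF // => -[x [[]]].
- by rewrite point_valE; case: ifP.
- by apply: point_val_le => -[x [Ux Cx]]; exists x; split=> //; exact: UV.
- rewrite !point_valE.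
  have -> : `[< (U `|` V) `&` C !=set0 >] = `[< U `&` C !=set0 >] || `[< V `&` C !=set0 >].
    apply/asboolP/orP => [[x [[Ux|Vx] Cx]]|[]/asboolP[x [Wx Cx]]].
    + by left; apply/asboolP; exists x.
    + by right; apply/asboolP; exists x.
    + by exists x; split=> //; left.
    + by exists x; split=> //; right.
  have -> : `[< (U `&` V) `&` C !=set0 >] = `[< U `&` C !=set0 >] && `[< V `&` C !=set0 >].
    apply/asboolP/andP => [[x [[Ux Vx] Cx]]|[/asboolP UC /asboolP VC]].
      by split; apply/asboolP; exists x.
    exact: irreducible_meetI.
  by do 2!case: asboolP => _ //=; rewrite addeC.
Qed.

Lemma directed_open_family_ub D (I : finType) (F : I -> set X) :
  directed_open_family D -> (forall i, D (F i)) ->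
  exists2 W, D W & forall i, F i `<=` W.
Proof.
case=> -[U0 DU0] _ D_dir DF.
suff [W DW FW] : exists2 W, D W & forall i, i \in enum I -> F i `<=` W.
  by exists W => // i; apply: FW; rewrite mem_enum.
elim: (enum I) => [|j s [W DW FW]]; first by exists U0.
have [W' DW' sW'] := D_dir _ _ DW (DF j).
exists W' => // i; rewrite inE => /predU1P[->|/FW iW] x Fx; apply: sW'; first by right.
by left; exact: iW.
Qed.

Lemma directed_open_family_meets D (I : finType) (C : I -> set X) :
  directed_open_family D ->
  exists2 W, D W & forall i, (\bigcup_(U in D) U) `&` C i !=set0 -> W `&` C i !=set0.
Proof.
move=> D_dir; have [[U0 DU0] _ _] := D_dir.
have /choice[F DF] : forall i, exists U,
    D U /\ ((\bigcup_(U in D) U) `&` C i !=set0 -> U `&` C i !=set0).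
  move=> i; case: (pselect ((\bigcup_(U in D) U) `&` C i !=set0)) => [|no_meet].
    by case=> x [[U DU Ux] Cx]; exists U; split=> // _; exists x.
  by exists U0; split=> // /no_meet.
have [W DW FW] := directed_open_family_ub D_dir (fun i => (DF i).1).
by exists W => // i /(proj2 (DF i))[x [Fx Cx]]; exists x; split=> //; exact: (FW i).
Qed.

Section PointValSum.
Variables (n : nat) (a : 'I_n -> R) (C : 'I_n -> set X) (nu : set X -> \bar R).
Hypotheses (a_ge0 : forall i, (0 <= a i)%R) (C_irr : forall i, irreducible (C i))
  (nu_sum : forall U, open U -> nu U = \sum_(i < n) (a i)%:E * point_val (C i) U).

Lemma point_val_sum_valuation : is_valuation nu.
Proof.
have [sum0 sum_ge0 sum_le sum_mod] :=
  is_valuation_weighted_sum a_ge0 (fun i => is_valuation_point_val (C_irr i)).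
split=> [|U oU|U V oU oV UV|U V oU oV].
- by rewrite (nu_sum open0); exact: sum0.
- by rewrite nu_sum //; exact: sum_ge0.
- by rewrite !nu_sum //; exact: sum_le.
- have oUV := openU oU oV; have oUIV := openI oU oV.
  by rewrite !nu_sum //; exact: sum_mod.
Qed.

Lemma point_val_sum_le U V : open U -> open V ->
  (forall i, U `&` C i !=set0 -> V `&` C i !=set0) -> nu U <= nu V.
Proof.
move=> oU oV UV; rewrite !nu_sum //; apply: lee_sum => i _.
by apply: lee_wpmul2l; [rewrite lee_fin|exact: point_val_le (UV i)].
Qed.

Lemma point_val_sum_continuous : continuous_valuation nu.
Proof.
move=> D D_dir; have [_ oD _] := D_dir.
have oDU : open (\bigcup_(U in D) U) by exact: bigcup_open.
have [W DW meetW] := directed_open_family_meets C D_dir.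
apply/le_anti/andP; split.
- apply: le_ereal_sup_tmp; exists (nu W); first by exists W.
  by apply: point_val_sum_le => //; exact: oD.
- apply/ereal_supP => _ [U DU <-]; apply: point_val_sum_le => // [|i [x [Ux Cx]]].
    exact: oD.
  by exists x; split=> //; exists U.
Qed.

Lemma point_val_sum_bounded : bounded_valuation nu.
Proof.
rewrite /bounded_valuation (nu_sum openT) ltey_eq; apply/orP; left.
by apply/sum_fin_numP => i _ _; rewrite point_valE; case: ifP; rewrite ?mule1 ?mule0.
Qed.

Lemma point_val_sum_finitely_valued : finitely_valued nu.
Proof.
pose g (S : {set 'I_n}) := \sum_(i < n) (a i)%:E * (if i \in S then 1 else 0).
apply: (@sub_finite_set _ _ (g @` setT)); last exact/finite_image/finite_finset.
move=> _ [U oU <-]; exists [set i | `[< U `&` C i !=set0 >]]%SET => //.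
by rewrite nu_sum // /g; apply: eq_bigr => i _; rewrite inE point_valE.
Qed.

End PointValSum.

Lemma is_valuation_setIr nu V : open V -> is_valuation nu ->
  is_valuation (fun U => nu (U `&` V)).
Proof.
move=> oV [nu0 nu_ge0 nu_le nu_mod]; split=> [|U oU|U W oU oW UW|U W oU oW].
- by rewrite set0I.
- exact/nu_ge0/openI.
- by apply: nu_le; [exact: openI|exact: openI|exact: setSI].
- have oUV := openI oU oV; have oWV := openI oW oV.
  by rewrite nu_mod // -setIUl setIACA setIid.
Qed.

Lemma continuous_valuation_setIr nu V : open V -> continuous_valuation nu ->
  continuous_valuation (fun U => nu (U `&` V)).
Proof.
move=> oV nu_cont D [[U0 DU0] oD D_dir] /=.
rewrite setI_bigcupl -[X in nu X](bigcup_image D (fun U => U `&` V) id).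
rewrite nu_cont ?image_comp //.
split=> [|_ [U DU <-]|_ _ [U DU <-] [W DW <-]]; first by exists (U0 `&` V), U0.
  exact/openI/oV/oD.
have [Z DZ sZ] := D_dir _ _ DU DW; exists (Z `&` V); first by exists Z.
by move=> x [[Ux Vx]|[Wx Vx]]; split=> //; apply: sZ; [left|right].
Qed.

Definition maximal_open_below nu V :=
  [/\ open V, nu V < nu setT &
      forall W, open W -> V `<=` W -> nu W < nu setT -> W = V].

Lemma exists_maximal_open_below nu (s : seq (\bar R)) :
  is_valuation nu -> continuous_valuation nu ->
  (forall U, open U -> nu U \in s) -> nu setT != 0 ->
  exists V, maximal_open_below nu V.
Proof.
move=> [nu0 nu_ge0 nu_le nu_mod] nu_cont nu_s nuT_neq0.
have set0_below : open (@set0 X) /\ nu set0 < nu setT.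
  by split; [exact: open0|rewrite nu0 lt0e nuT_neq0 (nu_ge0 _ openT)].
have [U0 [oU0 U0_lt] U0_max] := @exists_argmax_seq _ _ _
  (fun U => open U /\ nu U < nu setT) nu s set0 set0_below (fun U oU => nu_s U oU.1).
have U0_fin : nu U0 \is a fin_num.
  by rewrite ge0_fin_numE ?nu_ge0 // (lt_le_trans U0_lt) ?leey.
pose D := [set W | [/\ open W, U0 `<=` W & nu W = nu U0]].
have D_dir : directed_open_family D.
  split=> [|W [oW _ _]//|W1 W2 [o1 s1 e1] [o2 s2 e2]]; first by exists U0; split.
  exists (W1 `|` W2) => //; split; [exact: openU|by move=> x /s1; left|].
  have oI := openI o1 o2.
  have eI : nu (W1 `&` W2) = nu U0.
    apply/le_anti/andP; split; first by rewrite -e1; apply: nu_le => // x [].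
    by apply: nu_le => // x U0x; split; [exact: s1|exact: s2].
  have := nu_mod _ _ o1 o2; rewrite e1 e2 eI => /(congr1 (fun y => y - nu U0)).
  by rewrite !addeK.
pose V := \bigcup_(W in D) W.
have oV : open V by apply: bigcup_open => W [].
have U0V : U0 `<=` V by move=> x U0x; exists U0 => //; split.
have nuV : nu V = nu U0.
  rewrite nu_cont // (_ : nu @` D = [set nu U0]) ?ereal_sup1 //.
  by apply/seteqP; split=> [_ [W [_ _ eW] <-] //|_ ->]; exists U0 => //; split.
exists V; split=> // [|W oW VW W_lt]; first by rewrite nuV.
apply/seteqP; split=> // x Wx; exists W => //; split=> //; first exact: subset_trans VW.
by apply/le_anti; rewrite U0_max //= -nuV nu_le.
Qed.

Section MaximalOpenBelow.
Variables (nu : set X -> \bar R) (V : set X).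
Hypotheses (nu_val : is_valuation nu) (nu_bnd : bounded_valuation nu)
  (V_max : maximal_open_below nu V).

Lemma maximal_open_below_setU W : open W -> ~ W `<=` V -> nu (W `|` V) = nu setT.
Proof.
move=> oW WV; have [oV _ maxV] := V_max; have [_ _ nu_le _] := nu_val.
have oWV := openU oW oV.
apply/le_anti/andP; split; first by apply: nu_le => //; exact: openT.
rewrite leNgt; apply/negP => lt.
apply: WV => x Wx; rewrite -(maxV _ oWV _ lt); first by left.
by move=> y Vy; right.
Qed.

Lemma irreducible_maximal_open_belowC : irreducible (~` V).
Proof.
have [oV V_lt _] := V_max; have [_ _ nu_le nu_mod] := nu_val.
split=> [|B1 B2 cB1 cB2 VB].
  apply/set0P/eqP => VC0; suff VT : V = setT by rewrite VT ltxx in V_lt.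
  by rewrite -[V]setCK VC0 setC0.
apply: contrapT => /not_orP[nB1 nB2].
have subC_contra W : ~ ~` V `<=` W -> ~ ~` W `<=` V.
  by move=> nVW WV; apply: nVW; rewrite -[W]setCK; exact: subsetC.
have oB1 := closed_openC cB1; have oB2 := closed_openC cB2.
have capV : (~` B1 `|` V) `&` (~` B2 `|` V) = V.
  apply/seteqP; split=> x; last by move=> Vx; split; right.
  by move=> [[nB1x|//] [nB2x|//]]; apply: contrapT => /VB[].
have := nu_mod _ _ (openU oB1 oV) (openU oB2 oV).
rewrite !maximal_open_below_setU ?capV //; [|exact: subC_contra|exact: subC_contra].
have [t nuT] := bounded_valuation_EFin nu_val nu_bnd openT.
move=> sumE; suff : nu setT + nu setT < nu setT + nu setT by rewrite ltxx.
have oUU := openU (openU oB1 oV) (openU oB2 oV).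
rewrite {1}sumE; apply: le_lt_trans (leeD2r _ (nu_le _ _ oUU openT (@subsetT _ _))) _.
by rewrite lteD2lE // nuT.
Qed.

Lemma maximal_open_below_decomp : exists2 b : R, (0 < b)%R &
  forall U, open U -> nu U = b%:E * point_val (~` V) U + nu (U `&` V).
Proof.
have [oV V_lt _] := V_max; have [_ _ _ nu_mod] := nu_val.
have [t nuT] := bounded_valuation_EFin nu_val nu_bnd openT.
have [m nuV] := bounded_valuation_EFin nu_val nu_bnd oV.
exists (t - m)%R; first by rewrite subr_gt0 -lte_fin -nuT -nuV.
move=> U oU; rewrite point_valE; case: asboolP => [[x [Ux nVx]]|UV].
- have := nu_mod _ _ oU oV; rewrite maximal_open_below_setU //; last by move/(_ x Ux).
  have [u ->] := bounded_valuation_EFin nu_val nu_bnd oU.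
  have [w ->] := bounded_valuation_EFin nu_val nu_bnd (openI oU oV).
  by rewrite nuT nuV mule1 -!EFinD => -[eq]; congr (_%:E); lra.
- rewrite mule0 add0e setIidl // => x Ux; apply: contrapT => nVx.
  by apply: UV; exists x.
Qed.

End MaximalOpenBelow.

Definition point_val_combination nu :=
  exists (n : nat) (a : 'I_n -> R) (C : 'I_n -> set X),
     [/\ (forall i, (0 < a i)%R),
         (forall i, closed (C i) /\ irreducible (C i)) &
         (forall U, open U -> nu U = \sum_(i < n) (a i)%:E * point_val (C i) U)].

Lemma point_val_combination0 nu : (forall U, open U -> nu U = 0) ->
  point_val_combination nu.
Proof.
move=> nu0; exists 0%N, (fun=> 1%R), (fun=> set0).
by split=> [[]//|[]//|U oU]; rewrite big_ord0 nu0.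
Qed.

Lemma point_val_combination_cons nu mu (b : R) C : (0 < b)%R ->
  closed C -> irreducible C ->
  (forall U, open U -> nu U = b%:E * point_val C U + mu U) ->
  point_val_combination mu -> point_val_combination nu.
Proof.
move=> b_gt0 C_cl C_irr nu_mu [n [a [Cs [a_gt0 Cs_irr mu_sum]]]].
exists n.+1, (fun i => if unlift ord0 i is Some j then a j else b),
  (fun i => if unlift ord0 i is Some j then Cs j else C).
split=> [i|i|U oU]; [by case: unliftP|by case: unliftP|].
rewrite big_ord_recl /= unlift_none nu_mu // mu_sum //; congr (_ + _).
by apply: eq_bigr => i _; rewrite liftK.
Qed.

Lemma finitely_valued_point_val_combination nu (s : seq (\bar R)) :
  is_valuation nu -> continuous_valuation nu -> bounded_valuation nu ->
  (forall U, open U -> nu U \in s) -> point_val_combination nu.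
Proof.
have [k] := ubnP (size s); elim: k nu s => // k IH nu s s_lt nu_val nu_cont nu_bnd nu_s.
have [_ nu_ge0 nu_le _] := nu_val.
have [nuT0|nuT_neq0] := eqVneq (nu setT) 0.
  apply: point_val_combination0 => U oU.
  apply/le_anti; rewrite (nu_ge0 _ oU) andbT -nuT0; apply: nu_le => //; exact: openT.
have [V V_max] := exists_maximal_open_below nu_val nu_cont nu_s nuT_neq0.
have [oV V_lt _] := V_max.
have [b b_gt0 nu_decomp] := maximal_open_below_decomp nu_val nu_bnd V_max.
apply: (point_val_combination_cons b_gt0 (open_closedC oV)
  (irreducible_maximal_open_belowC nu_val nu_bnd V_max) nu_decomp).
pose not_top := [pred y | y != nu setT].
apply: (IH _ [seq y <- s | not_top y]).
- rewrite -ltnS (leq_trans _ s_lt) // ltnS size_filter -(count_predC not_top s).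
  rewrite -[X in (X < _)%N]addn0 ltn_add2l -has_count.
  by apply/hasP; exists (nu setT); [exact: nu_s openT|rewrite /= negbK].
- exact: is_valuation_setIr.
- exact: continuous_valuation_setIr.
- by rewrite /bounded_valuation setTI (lt_trans V_lt).
- move=> U oU; have oUV := openI oU oV.
  rewrite mem_filter (nu_s _ oUV) andbT /= lt_eqF //.
  by apply: le_lt_trans V_lt; apply: nu_le => // x [].
Qed.

End Valuations.

Theorem proposition4p3 (R : realType) (X : topologicalType) (nu : set X -> \bar R) :
  (is_valuation nu /\ continuous_valuation nu /\ bounded_valuation nu /\
   finitely_valued nu) <->
  (exists (n : nat) (a : 'I_n -> R) (C : 'I_n -> set X),
     [/\ (forall i, (0 < a i)%R),
         (forall i, closed (C i) /\ irreducible (C i)) &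
         (forall U, open U -> nu U = \sum_(i < n) (a i)%:E * point_val (C i) U)]).
Proof.
split=> [[nu_val [nu_cont [nu_bnd /finite_seqP[s nu_s]]]]|[n [a [C [a_gt0 C_cl nu_sum]]]]].
  apply: (finitely_valued_point_val_combination (s := s)) => // U oU.
  by have : [set` s] (nu U) by rewrite -nu_s; exists U.
have a_ge0 i := ltW (a_gt0 i); have C_irr i := (C_cl i).2.
split; first exact: point_val_sum_valuation a_ge0 C_irr nu_sum.
split; first exact: point_val_sum_continuous a_ge0 nu_sum.
split; first exact: point_val_sum_bounded nu_sum.
exact: point_val_sum_finitely_valued nu_sum.
Qed.
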